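(* Let $f:D^n\to\mathbb{R}^d$ have finite global sensitivity $GS_f>0$ and suppose some $y\in D^n$ has $LS_f(y)=GS_f$. For $x\in D^n$ let $gd(x)=\min_{y:\,LS_f(y)=GS_f}d(y,x)$. Let $\beta>0$ satisfy $$\beta\le\min_{x:\,LS_f(x)\neq GS_f}\frac{1}{gd(x)}\ln\Big(\frac{GS_f}{LS_f(x)}\Big)$$ (with the convention $\ln(GS_f/0)=+\infty$). Then for all $x\in D^n$, $S^*_{f,\beta}(x)=GS_f\cdot e^{-\beta\cdot gd(x)}$.
   Context: $D^n$ denotes the set of datasets consisting of $n$ elements; Hamming distance $d(x,y)=|\{i:x_i\neq y_i\}|$. Global sensitivity: $GS_f=\max_{x,y:d(x,y)=1}\|f(x)-f(y)\|_1$. Local sensitivity: $LS_f(x)=\max_{y:d(x,y)=1}\|f(x)-f(y)\|_1$ (so $LS_f(x)\le GS_f$). For $\beta>0$, the $\beta$-smooth sensitivity of $f$ at $x$ is $S^*_{f,\beta}(x)=\max_{y\in D^n}\big(LS_f(y)\,e^{-\beta\, d(y,x)}\big)$. *)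

From HB Require Import structures.
From mathcomp Require Import all_boot all_order all_algebra.
From mathcomp Require Import all_classical all_reals all_analysis.
Set Implicit Arguments. Unset Strict Implicit. Unset Printing Implicit Defensive.
Import Order.TTheory GRing.Theory Num.Theory.
Local Open Scope classical_set_scope.
Local Open Scope ring_scope.

Section DP.
Variables (R : realType) (D : eqType) (n d : nat).

Definition hamming (x y : n.-tuple D) : nat :=
  #|[pred i : 'I_n | tnth x i != tnth y i]|.

Definition l1norm (v : 'rV[R]_d) : R := \sum_(i < d) `|v ord0 i|.

Variable f : n.-tuple D -> 'rV[R]_d.

Definition GS_set : set R :=
  [set r | exists x y, hamming x y = 1%N /\ r = l1norm (f x - f y)].
Definition GS : R := sup GS_set.

Definition LS (x : n.-tuple D) : R :=
  sup [set r | exists y, hamming x y = 1%N /\ r = l1norm (f x - f y)].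

Definition smooth_sens (beta : R) (x : n.-tuple D) : R :=
  sup [set r | exists y, r = LS y * expR (- beta * (hamming y x)%:R)].

Definition gd_pred (x : n.-tuple D) : pred nat :=
  fun k => `[< exists y, LS y = GS /\ hamming y x = k >].

Definition gd (x : n.-tuple D) : nat :=
  match pselect (exists k, gd_pred x k) with
  | left h => ex_minn h
  | right _ => 0%N
  end.

End DP.

From HB Require Import structures.
From mathcomp Require Import all_boot all_order all_algebra.
From mathcomp Require Import all_classical all_reals all_analysis.
Set Implicit Arguments. Unset Strict Implicit.
Import Order.TTheory GRing.Theory Num.Theory.
Local Open Scope classical_set_scope.
Local Open Scope ring_scope.

(* Every local sensitivity is at most [GS e^{-beta gd}]: at points of maximal
   local sensitivity [gd = 0], and elsewhere this is exactly the hypothesis on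
   [beta].  Since [gd] is 1-Lipschitz for the Hamming distance, each term
   [LS y e^{-beta d(y,x)}] of the smooth sensitivity is then at most
   [GS e^{-beta gd x}], and the bound is attained at a point [y] with
   [LS y = GS] realising [gd x]. *)

Section Hamming.
Variables (D : eqType) (n : nat).

Lemma hamming_triangle (x y z : n.-tuple D) :
  (hamming z x <= hamming z y + hamming y x)%N.
Proof.
rewrite /hamming -cardUI; apply: leq_trans (leq_addr _ _).
apply: subset_leq_card; apply/fintype.subsetP => i; rewrite !inE.
by case: (tnth z i =P tnth y i) => [->|].
Qed.

Lemma hamming_refl (x : n.-tuple D) : hamming x x = 0%N.
Proof. by apply: eq_card0 => i; rewrite !inE eqxx. Qed.

End Hamming.

Section SmoothSensitivity.
Variables (R : realType) (D : eqType) (n d : nat) (f : n.-tuple D -> 'rV[R]_d).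
Hypothesis GS_bounded : has_ubound (GS_set f).
Hypothesis GS_gt0 : 0 < GS f.
Hypothesis GS_attained : exists y, LS f y = GS f.

Let LS_set y :=
  [set r | exists y', hamming y y' = 1%N /\ r = l1norm (f y - f y')].

Lemma LS_ge0 y : 0 <= LS f y.
Proof.
rewrite /LS -/(LS_set y).
have [->|/set0P[r Er]] := eqVneq (LS_set y) set0; first by rewrite sup0.
apply: le_trans (ub_le_sup _ Er).
  by case: Er => y' [_ ->]; rewrite sumr_ge0.
case: GS_bounded => M hM; exists M => s [y' [? ->]]; by apply: hM; exists y, y'.
Qed.

Lemma LS_le_GS y : LS f y <= GS f.
Proof.
rewrite /LS -/(LS_set y).
have [->|neq0] := eqVneq (LS_set y) set0; first by rewrite sup0 ltW.
apply: ge_sup; first exact/set0P.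
by move=> s [y' [? ->]]; apply: ub_le_sup => //; exists y, y'.
Qed.

Lemma gd_attained x : exists2 z, LS f z = GS f & hamming z x = gd f x.
Proof.
rewrite /gd; case: pselect => [gd_ex|[]]; last first.
  by case: GS_attained => y hy; exists (hamming y x); apply/asboolP; exists y.
by case: ex_minnP => m /asboolP[z [? ?]] _; exists z.
Qed.

Lemma gd_min x {z} : LS f z = GS f -> (gd f x <= hamming z x)%N.
Proof.
move=> Lz; rewrite /gd; case: pselect => [gd_ex|[]]; last first.
  by exists (hamming z x); apply/asboolP; exists z.
by case: ex_minnP => m _; apply; apply/asboolP; exists z.
Qed.

Lemma gd_eq0 {y} : LS f y = GS f -> gd f y = 0%N.
Proof. by move/(gd_min y); rewrite hamming_refl leqn0 => /eqP. Qed.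

Lemma gd_lipschitz x y : (gd f x <= gd f y + hamming y x)%N.
Proof.
have [w Lw <-] := gd_attained y.
by apply: leq_trans (gd_min x Lw) _; exact: hamming_triangle.
Qed.

Variable beta : R.
Hypothesis beta_gt0 : 0 < beta.
Hypothesis beta_le : forall {x}, LS f x != GS f -> 0 < LS f x ->
  beta <= ((gd f x)%:R)^-1 * ln (GS f / LS f x).

Lemma LS_le_decay y : LS f y <= GS f * expR (- beta * (gd f y)%:R).
Proof.
have [LG|LnG] := eqVneq (LS f y) (GS f).
  by rewrite (gd_eq0 LG) mulr0 expR0 mulr1 LG.
have [->|Lne0] := eqVneq (LS f y) 0; first by rewrite mulr_ge0 ?expR_ge0 ?ltW.
have Lgt0 : 0 < LS f y by rewrite lt_def Lne0 LS_ge0.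
have beta_bound := beta_le LnG Lgt0.
(* [0^-1 = 0] in Rocq, so [gd y = 0] would force [beta <= 0]. *)
have gd_gt0 : (0 : R) < (gd f y)%:R.
  rewrite ltr0n lt0n; apply/negP => /eqP gd0.
  by move: beta_bound; rewrite gd0 invr0 mul0r leNgt beta_gt0.
have exp_le : expR (beta * (gd f y)%:R) <= GS f / LS f y.
  rewrite -[leRHS]lnK ?posrE ?divr_gt0 // ler_expR.
  by rewrite -ler_pdivlMr // mulrC.
rewrite mulNr expRN ler_pdivlMr ?expR_gt0 // mulrC -ler_pdivlMr //.
Qed.

Lemma smooth_term_le x y :
  LS f y * expR (- beta * (hamming y x)%:R) <=
  GS f * expR (- beta * (gd f x)%:R).
Proof.
apply: le_trans (ler_wpM2r (expR_ge0 _) (LS_le_decay y)) _.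
rewrite -mulrA -expRD ler_pM2l // ler_expR -mulrDr -natrD !mulNr lerN2.
by rewrite ler_pM2l // ler_nat gd_lipschitz.
Qed.

End SmoothSensitivity.

Theorem theorem4 (R : realType) (D : eqType) (n d : nat)
  (f : n.-tuple D -> 'rV[R]_d) (beta : R) :
  has_ubound (GS_set f) ->
  0 < GS f ->
  (exists y, LS f y = GS f) ->
  0 < beta ->
  (forall x, LS f x != GS f -> 0 < LS f x ->
     beta <= ((gd f x)%:R)^-1 * ln (GS f / LS f x)) ->
  forall x, smooth_sens f beta x = GS f * expR (- beta * (gd f x)%:R).
Proof.
move=> hub hGS hex hb hbeta x.
have term_le := smooth_term_le hub hGS hex hb hbeta x.
have [z Lz Hz] := gd_attained hex x.
apply/le_anti/andP; split.
  apply: ge_sup; first by exists (LS f z * expR (- beta * (hamming z x)%:R)), z.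
  by move=> r [y ->].
rewrite -Lz -Hz; apply: ub_le_sup; last by exists z.
by exists (GS f * expR (- beta * (gd f x)%:R)) => r [y ->].
Qed.
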